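(* Let $A\in \mathrm{GL}_{2g}(\mathbb{Z})$ be a hyperbolic matrix, and let $E^{c},E^{e}\subset\mathbb{R}^{2g}$ be its contracting and expanding subspaces. Let $\Lambda^+,\Lambda^-\subseteq\mathbb{Z}^{2g}$ be sublattices of rank $g$ such that $(\Lambda^+\otimes\mathbb{R})\cap E^c=0$ and $(\Lambda^-\otimes\mathbb{R})\cap E^e=0$. For $N\geq 1$ put $\Lambda_N^{\pm}=A^{\pm N}\Lambda^{\pm}$. Then the cardinality of $\mathbb{Z}^{2g}/(\Lambda_N^+ + \Lambda_N^-)$ grows exponentially with $N$, i.e. there exist constants $C>0$ and $r>1$ such that $\#\big(\mathbb{Z}^{2g}/(\Lambda_N^++\Lambda_N^-)\big)\geq C r^N$ for all $N\geq 1$.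
   Context: A matrix $A\in\mathrm{GL}_{2g}(\mathbb{Z})$ is called hyperbolic if $\mathbb{R}^{2g}$ is the direct sum of a $g$-dimensional contracting subspace $E^c$, spanned by $g$ eigenvectors with eigenvalues of modulus less than $1$, and a complementary $g$-dimensional expanding subspace $E^e$, spanned by $g$ eigenvectors with eigenvalues of modulus greater than $1$. *)

From HB Require Import structures.
From mathcomp Require Import all_boot all_order all_algebra.
From mathcomp Require Import complex.
From mathcomp Require Import reals.
Set Implicit Arguments. Unset Strict Implicit. Unset Printing Implicit Defensive.
Import Order.TTheory GRing.Theory Num.Theory.
Local Open Scope ring_scope.
Local Open Scope complex_scope.

(* Vectors of R^n, Z^n, C^n are ROW vectors; a matrix M acts on a column
   vector v as M v, i.e. on row vectors as v *m M^T. *)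

Definition mxZR (R : realType) m n (M : 'M[int]_(m, n)) : 'M[R]_(m, n) :=
  map_mx (fun z : int => z%:~R) M.
Definition mxRC (R : realType) m n (M : 'M[R]_(m, n)) : 'M[R[i]]_(m, n) :=
  map_mx (fun x : R => x%:C) M.

Definition in_lattice k n (B : 'M[int]_(k, n)) (v : 'rV[int]_n) : Prop :=
  exists c : 'rV[int]_k, v = c *m B.

Definition in_sum_lattice k1 k2 n (B1 : 'M[int]_(k1, n)) (B2 : 'M[int]_(k2, n))
  (v : 'rV[int]_n) : Prop :=
  exists v1 v2, [/\ in_lattice B1 v1, in_lattice B2 v2 & v = v1 + v2].

(* #(Z^n / (Lambda1 + Lambda2)) >= m : there are m pairwise distinct cosets. *)
Definition quot_card_ge k1 k2 n (B1 : 'M[int]_(k1, n)) (B2 : 'M[int]_(k2, n))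
  (m : nat) : Prop :=
  exists f : 'I_m -> 'rV[int]_n,
    forall i j, i != j -> ~ in_sum_lattice B1 B2 (f i - f j).

(* A in GL_{2g}(Z) (with 2g written g + g) is hyperbolic, witnessed by a basis
   of C^{2g} of eigenvectors (rows of V) with eigenvalues lam: the first g
   (rows lshift) have modulus < 1, the last g (rows rshift) modulus > 1. *)
Definition hyperbolic_basis (R : realType) g (A : 'M[int]_(g + g))
  (V : 'M[R[i]]_(g + g)) (lam : 'I_(g + g) -> R[i]) : Prop :=
  [/\ V \in unitmx,
      forall k, row k V *m (mxRC (@mxZR R _ _ A))^T = lam k *: row k V,
      forall i : 'I_g, `|lam (lshift g i)| < 1
    & forall i : 'I_g, 1 < `|lam (rshift g i)| ].

(* Contracting subspace E^c (resp. expanding E^e): real vectors in the complex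
   span of the contracting (resp. expanding) eigenvectors. *)
Definition in_Ec (R : realType) g (V : 'M[R[i]]_(g + g)) (w : 'rV[R]_(g + g)) : Prop :=
  exists c : 'rV[R[i]]_g, mxRC w = c *m usubmx V.
Definition in_Ee (R : realType) g (V : 'M[R[i]]_(g + g)) (w : 'rV[R]_(g + g)) : Prop :=
  exists c : 'rV[R[i]]_g, mxRC w = c *m dsubmx V.

Definition meets_trivially (R : realType) g k (L : 'M[int]_(k, g + g))
  (E : 'rV[R]_(g + g) -> Prop) : Prop :=
  forall x : 'rV[R]_k, E (x *m @mxZR R _ _ L) -> x *m @mxZR R _ _ L = 0.

(* Write the lattices in the eigenbasis V of A^T. Conjugating by the
   unimodular matrix A^{TN} shows that the index of Lambda_N^+ + Lambda_N^- is
   |det G_{2N}|, where G_K has rows Lambda^+ A^{TK} and Lambda^-. In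
   eigencoordinates G_K is a matrix M_K times diag(1, lambda_e^K) times V: the
   contracting columns of Lambda^+ are multiplied by lambda_c^K and the
   expanding columns of Lambda^- divided by lambda_e^K, so M_K tends to the
   anti-diagonal block matrix [[0, X_e], [Y_c, 0]]. Since E^c and E^e are
   stable under complex conjugation, the transversality hypotheses (stated for
   real vectors) force X_e and Y_c to be invertible; hence
   |det G_K| >= c * |prod lambda_e|^K for large K. Finally, by the Smith normal
   form, Z^n / L has at least |det L| classes. *)

From HB Require Import structures.
From mathcomp Require Import all_boot all_order all_algebra.
From mathcomp Require Import complex reals zify.
From mathcomp Require Import classical_sets topology normedtype sequences.
Import Order.TTheory GRing.Theory Num.Theory.
Import numFieldTopology.Exports numFieldNormedType.Exports.
Set Implicit Arguments. Unset Strict Implicit. Unset Printing Implicit Defensive.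
Local Open Scope ring_scope.
Local Open Scope classical_set_scope.
Local Open Scope complex_scope.

(** * Indices of integer lattices *)

Lemma absz_det_unitmx n (U : 'M[int]_n) : U \in unitmx -> `|\det U|%N = 1%N.
Proof. by rewrite unitmxE => /orP[] /eqP ->. Qed.

Lemma card_dffun_ord n (e : 'I_n -> nat) :
  #|{dffun forall i : 'I_n, 'I_(e i)}| = (\prod_i e i)%N.
Proof.
by rewrite card_dep_ffun foldrE big_image; apply: eq_bigr => i _; rewrite card_ord.
Qed.

Lemma lattice_index_ge_det n (M : 'M[int]_n) m : (m <= `|\det M|)%N ->
  exists f : 'I_m -> 'rV[int]_n, forall k l, k != l -> ~ in_lattice M (f k - f l).
Proof.
have [L L_unit [U U_unit [d _ ->]]] := int_Smith_normal_form M.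
set D := \matrix_(i, j) _; have -> : D = diag_mx (\row_i d`_i).
  by apply/matrixP => i j; rewrite !mxE.
pose e (i : 'I_n) := absz d`_i.
have -> : absz (\det (L *m diag_mx (\row_i d`_i) *m U)) = (\prod_i e i)%N.
  rewrite !det_mulmx !abszM (absz_det_unitmx L_unit) (absz_det_unitmx U_unit).
  rewrite mul1n muln1 det_diag (big_morph absz abszM (_ : `|1|%N = 1%N)) //.
  by apply: eq_bigr => i _; rewrite mxE.
(* In the Smith basis, the vectors whose i-th coordinate lies in [0, |d_i|)
   are pairwise incongruent. *)
rewrite -card_dffun_ord => m_le.
pose digits (k : 'I_m) := enum_val (widen_ord m_le k).
pose vec k : 'rV[int]_n := \row_i (digits k i : nat)%:Z.
exists (fun k => vec k *m U) => k l kl [c].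
rewrite -mulmxBl !mulmxA => /(congr1 (mulmx^~ (invmx U))); rewrite !mulmxK //.
move=> /rowP eq_vec; apply/negP: kl; rewrite negbK.
suff /enum_val_inj/(congr1 val) eq_kl : digits k = digits l by apply/eqP/val_inj.
apply/ffunP => i; apply/val_inj => /=.
have := eq_vec i; rewrite mul_mx_diag !mxE.
have := ltn_ord (digits k i); have := ltn_ord (digits l i); rewrite /e.
set a := (digits k i : nat); set b := (digits l i : nat); set x := (\sum_j _).
move=> lt_b lt_a /(congr1 absz); rewrite abszM.
by case: `|x|%N => [|y]; lia.
Qed.

Lemma quot_card_ge_col_det n1 n2 (B1 : 'M[int]_(n1, n1 + n2))
    (B2 : 'M[int]_(n2, n1 + n2)) m :
  (m <= `|\det (col_mx B1 B2)|)%N -> quot_card_ge B1 B2 m.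
Proof.
move=> /lattice_index_ge_det[f f_sep]; exists f.
move=> k l kl [v1 [v2 [[c1 ->] [c2 ->] fkl]]].
by apply: (f_sep k l kl); exists (row_mx c1 c2); rewrite fkl mul_row_col.
Qed.

Lemma absz_det_col_exp n1 n2 (B1 : 'M[int]_(n1, n1 + n2))
    (B2 : 'M[int]_(n2, n1 + n2)) (P : 'M[int]_(n1 + n2)) N : P \in unitmx ->
  `|\det (col_mx (B1 *m P ^+ N) (B2 *m invmx P ^+ N))|%N =
  `|\det (col_mx (B1 *m P ^+ (N + N)) B2)|%N.
Proof.
move=> P_unit.
have PN : invmx P ^+ N *m P ^+ N = 1%:M.
  rewrite mulmxE -exprMn_comm -?mulmxE ?mulVmx ?expr1n //.
  by rewrite /GRing.comm -!mulmxE mulVmx ?mulmxV.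
have /(congr1 (absz \o determinant)) /= := PN.
rewrite det_mulmx det1 abszM => /eqP; rewrite muln_eq1 => /andP[_ /eqP detPN].
have <- : col_mx (B1 *m P ^+ N) (B2 *m invmx P ^+ N) *m P ^+ N =
    col_mx (B1 *m P ^+ (N + N)) B2.
  by rewrite mul_col_mx -!mulmxA PN mulmx1 exprD mulmxE.
by rewrite det_mulmx abszM detPN muln1.
Qed.

Lemma map_mxX (aR rR : pzRingType) (f : {rmorphism aR -> rR}) n (M : 'M[aR]_n) K :
  map_mx f (M ^+ K) = map_mx f M ^+ K.
Proof.
elim: K => [|K IHK]; first exact: map_mx1.
by rewrite !exprSr -!mulmxE map_mxM IHK.
Qed.

Lemma row_mx_lrshift (F : Type) m n (f : 'I_(m + n) -> F) :
  \row_k f k = row_mx (\row_i f (lshift n i)) (\row_i f (rshift m i)).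
Proof.
apply/rowP => k; rewrite -(splitK k); case: (split k) => i /=.
  by rewrite row_mxEl !mxE.
by rewrite row_mxEr !mxE.
Qed.

Lemma unitmx_antidiag_block (F : comUnitRingType) n (B C : 'M[F]_n) :
  B \in unitmx -> C \in unitmx -> block_mx 0 B C 0 \in unitmx.
Proof.
move=> B_unit C_unit.
have swap : block_mx 0 B C 0 *m block_mx 0 1%:M 1%:M 0 = block_mx B 0 0 C.
  by rewrite mulmx_block !mul0mx !mulmx0 !mulmx1 !addr0 !add0r.
have : block_mx B 0 0 C \in unitmx.
  by rewrite unitmxE det_ublock unitrM -!unitmxE B_unit.
by rewrite -swap unitmx_mul => /andP[].
Qed.

Lemma mul_invmx_hsub (F : comUnitRingType) k m n (V : 'M[F]_(m + n))
    (w : 'M_(k, m + n)) : V \in unitmx ->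
  w = lsubmx (w *m invmx V) *m usubmx V + rsubmx (w *m invmx V) *m dsubmx V.
Proof. by move=> V_unit; rewrite -mul_row_col !hsubmxK vsubmxK mulmxKV. Qed.

Section Eigenbasis.
Variables (F : fieldType) (n : nat) (Ac V : 'M[F]_n) (lam : 'I_n -> F).
Hypotheses (V_unit : V \in unitmx)
  (V_eigen : forall k, row k V *m Ac = lam k *: row k V).

Lemma eigenbasis_mul : V *m Ac = diag_mx (\row_k lam k) *m V.
Proof.
apply/row_matrixP => k.
by rewrite !row_mul V_eigen row_diag_mx mxE -scalemxAl -rowE.
Qed.

Lemma eigenbasis_exp K : V *m Ac ^+ K = diag_mx (\row_k lam k ^+ K) *m V.
Proof.
elim: K => [|K IHK].
  have -> : \row_k lam k ^+ 0 = const_mx 1 by apply/rowP => k; rewrite !mxE.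
  by rewrite diag_const_mx mul1mx; apply: mulmx1.
rewrite exprSr -mulmxE mulmxA IHK -mulmxA eigenbasis_mul mulmxA mulmx_diag.
by congr (diag_mx _ *m V); apply/rowP => k; rewrite !mxE exprSr.
Qed.

Lemma eigen_coord_eq (v : 'rV_n) mu j :
  v *m Ac = mu *: v -> (v *m invmx V) 0 j != 0 -> lam j = mu.
Proof.
set y := v *m invmx V => v_eigen y_j.
have yV : y *m V = v by rewrite mulmxKV.
have : y *m diag_mx (\row_k lam k) = mu *: y.
  apply: (can_inj (mulmxK V_unit)).
  by rewrite -mulmxA -eigenbasis_mul mulmxA yV v_eigen -scalemxAl yV.
move=> /rowP/(_ j); rewrite mul_mx_diag mxE [(mu *: y) 0 j]mxE [(\row__ _) 0 j]mxE.
by rewrite [mu * _]mulrC => /(mulfI y_j).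
Qed.

End Eigenbasis.

Section MatrixLimits.
Variables (F : numFieldType) (T : Type) (D : set_system T).
Context {FD : Filter D}.

Lemma cvg_det n (M : T -> 'M[F]_n) (L : 'M[F]_n) :
  (forall i j, M t i j @[t --> D] --> L i j) -> \det (M t) @[t --> D] --> \det L.
Proof.
move=> ML; apply: cvg_big => [|s _]; first exact: add_continuous.
apply: cvgM; first exact: cvg_cst.
by apply: cvg_big => [|i _]; [exact: mul_continuous | exact: ML].
Qed.

Lemma near_norm_det_ge_half n (M : T -> 'M[F]_n) (L : 'M[F]_n) :
  (forall i j, M t i j @[t --> D] --> L i j) ->
  \forall t \near D, `|\det L| / 2 <= `|\det (M t)|.
Proof.
move=> ML; have [->|L_neq0] := eqVneq (\det L) 0.
  by near=> t; rewrite normr0 mul0r.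
apply: cvgr_norm_ge _ (cvg_det ML) _ _.
by rewrite gtr_pMr ?normr_gt0 // invf_lt1 // ltr1n.
Unshelve. all: by end_near.
Qed.

Lemma cvg_block_mx m1 m2 n1 n2
    (Aul : T -> 'M[F]_(m1, n1)) (Aur : T -> 'M[F]_(m1, n2))
    (Adl : T -> 'M[F]_(m2, n1)) (Adr : T -> 'M[F]_(m2, n2))
    (Lul : 'M[F]_(m1, n1)) (Lur : 'M[F]_(m1, n2))
    (Ldl : 'M[F]_(m2, n1)) (Ldr : 'M[F]_(m2, n2)) :
  (forall i j, Aul t i j @[t --> D] --> Lul i j) ->
  (forall i j, Aur t i j @[t --> D] --> Lur i j) ->
  (forall i j, Adl t i j @[t --> D] --> Ldl i j) ->
  (forall i j, Adr t i j @[t --> D] --> Ldr i j) ->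
  forall i j, block_mx (Aul t) (Aur t) (Adl t) (Adr t) i j @[t --> D] -->
    block_mx Lul Lur Ldl Ldr i j.
Proof.
move=> ul ur dl dr i j; rewrite -(splitK i) -(splitK j).
case: (split i) => i'; case: (split j) => j' /=.
- by rewrite block_mxEul; under eq_cvg do rewrite block_mxEul; exact: ul.
- by rewrite block_mxEur; under eq_cvg do rewrite block_mxEur; exact: ur.
- by rewrite block_mxEdl; under eq_cvg do rewrite block_mxEdl; exact: dl.
- by rewrite block_mxEdr; under eq_cvg do rewrite block_mxEdr; exact: dr.
Qed.

Lemma cvg0_mul_diag_mx m n (B : 'M[F]_(m, n)) (d : T -> 'rV[F]_n) :
  (forall j, d t 0 j @[t --> D] --> 0) ->
  forall i j, (B *m diag_mx (d t)) i j @[t --> D] --> (0 : 'M_(m, n)) i j.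
Proof.
move=> d0 i j; rewrite mxE -(mulr0 (B i j)).
under eq_cvg do rewrite mul_mx_diag mxE.
by apply: cvgM; [exact: cvg_cst | exact: d0].
Qed.

End MatrixLimits.

Lemma normr_normc (R : rcfType) (z : R[i]) : `|z| = (Normc.normc z)%:C.
Proof. by case: z => a b; rewrite normc_def. Qed.

Lemma normc_ge0 (R : rcfType) (z : R[i]) : 0 <= Normc.normc z.
Proof. by case: z => a b; rewrite /Normc.normc sqrtr_ge0. Qed.

Lemma normc_gt0 (R : rcfType) (z : R[i]) : (0 < Normc.normc z) = (z != 0).
Proof. by rewrite -ltcR -normr_normc normr_gt0. Qed.

(* The cast equips [R[i]] with the topology of its norm. *)
Lemma cvgc_expr (R : realType) (z : (R[i] : numFieldType)) :
  `|z| < 1 -> z ^+ K @[K --> \oo] --> 0.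
Proof.
move=> z_lt1; apply/cvgr0Pnorm_lt => e e_gt0.
have /complex_realP[e' e_def] : e \is Num.real by exact: gtr0_real.
have e'_gt0 : 0 < e' by rewrite -ltcR -e_def.
have /cvgr0Pnorm_lt/(_ e' e'_gt0) : Normc.normc z ^+ K @[K --> \oo] --> 0.
  by apply: cvg_expr; rewrite ger0_norm ?normc_ge0 // -ltcR -normr_normc.
apply: filterS => K; rewrite ger0_norm ?exprn_ge0 ?normc_ge0 // => lt_e'.
by rewrite normrX normr_normc -rmorphXn e_def ltcR.
Qed.

Lemma mxRC_mxZR (R : realType) m n (M : 'M[int]_(m, n)) :
  mxRC (mxZR R M) = map_mx intr M.
Proof. by apply/matrixP => i j; rewrite !mxE rmorph_int. Qed.

Section RealParts.
Variable R : realType.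
Implicit Types (n k s : nat).
Local Notation Re := (@complex.Re R).
Local Notation Im := (@complex.Im R).

Lemma conj_submx s n (S : 'M[R[i]]_(s, n)) (w : 'rV_n) :
  (map_mx conjc S <= S)%MS -> (w <= S)%MS -> (map_mx conjc w <= S)%MS.
Proof.
by move=> conjS /submxP[c ->]; rewrite map_mxM (submx_trans (submxMl _ _) conjS).
Qed.

Lemma mxRC_Re_submx s n (S : 'M[R[i]]_(s, n)) (w : 'rV_n) :
  (map_mx conjc S <= S)%MS -> (w <= S)%MS -> (mxRC (map_mx Re w) <= S)%MS.
Proof.
move=> conjS wS.
have -> : mxRC (map_mx Re w) = 2%:R^-1 *: (w + map_mx conjc w).
  by apply/matrixP => i j; rewrite !mxE ReJ_add mulrC.
by rewrite scalemx_sub // addmx_sub // conj_submx.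
Qed.

Lemma mxRC_Im_submx s n (S : 'M[R[i]]_(s, n)) (w : 'rV_n) :
  (map_mx conjc S <= S)%MS -> (w <= S)%MS -> (mxRC (map_mx Im w) <= S)%MS.
Proof.
move=> conjS wS.
have -> : mxRC (map_mx Im w) = ('i / 2%:R) *: (map_mx conjc w - w).
  by apply/matrixP => i j; rewrite !mxE ImJ_sub -mulrA mulrC [_^-1 * _]mulrC.
by rewrite scalemx_sub // addmx_sub // ?eqmx_opp // conj_submx.
Qed.

Lemma Re_mulmx_mxRC n k (x : 'rV[R[i]]_k) (B : 'M[R]_(k, n)) :
  map_mx Re (x *m mxRC B) = map_mx Re x *m B.
Proof.
apply/rowP => j; rewrite !mxE raddf_sum; apply: eq_bigr => l _.
by rewrite !mxE; case: (x 0 l) => a b /=; rewrite mulr0 subr0.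
Qed.

Lemma Im_mulmx_mxRC n k (x : 'rV[R[i]]_k) (B : 'M[R]_(k, n)) :
  map_mx Im (x *m mxRC B) = map_mx Im x *m B.
Proof.
apply/rowP => j; rewrite !mxE raddf_sum; apply: eq_bigr => l _.
by rewrite !mxE; case: (x 0 l) => a b /=; rewrite mulr0 add0r.
Qed.

Lemma real_kernel_trivial s n k (B : 'M[R]_(k, n)) (S : 'M[R[i]]_(s, n)) :
  row_free B -> (map_mx conjc S <= S)%MS ->
  (forall x : 'rV_k, (mxRC (x *m B) <= S)%MS -> x *m B = 0) ->
  forall x : 'rV[R[i]]_k, (x *m mxRC B <= S)%MS -> x = 0.
Proof.
move=> B_free conjS B_triv x xBS.
have /rowP Re_x : map_mx Re x = 0.
  apply: (row_free_inj B_free); rewrite mul0mx; apply: B_triv.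
  by rewrite -Re_mulmx_mxRC mxRC_Re_submx.
have /rowP Im_x : map_mx Im x = 0.
  apply: (row_free_inj B_free); rewrite mul0mx; apply: B_triv.
  by rewrite -Im_mulmx_mxRC mxRC_Im_submx.
apply/rowP => j; move: (Re_x j) (Im_x j); rewrite !mxE.
by case: (x 0 j) => a b /= -> ->.
Qed.

End RealParts.

(** * Growth of the determinant *)

Section HyperbolicLattices.
Variables (R : realType) (g : nat) (A : 'M[int]_(g + g)).
Variables (V : 'M[R[i]]_(g + g)) (lam : 'I_(g + g) -> R[i]).
Hypothesis g_gt0 : (0 < g)%N.
Hypotheses (V_unit : V \in unitmx)
  (V_eigen : forall k, row k V *m (mxRC (mxZR R A))^T = lam k *: row k V)
  (lam_contr : forall i : 'I_g, `|lam (lshift g i)| < 1)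
  (lam_exp : forall i : 'I_g, 1 < `|lam (rshift g i)|).
Variables Lp Lm : 'M[int]_(g, g + g).
Hypotheses (Lp_rank : \rank (mxZR R Lp) = g) (Lm_rank : \rank (mxZR R Lm) = g)
  (Lp_tr : meets_trivially Lp (in_Ec V)) (Lm_tr : meets_trivially Lm (in_Ee V)).

Local Notation mxZC M := (mxRC (mxZR R M)).
Local Notation Ac := (mxZC A)^T.

Lemma conj_Ac : map_mx conjc Ac = Ac.
Proof. by apply/matrixP => i j; rewrite !mxE conjc_real. Qed.

Lemma conj_eigen_coord_eq0 k j : `|lam j| != `|lam k| ->
  (map_mx conjc (row k V) *m invmx V) 0 j = 0.
Proof.
have conj_row : map_mx conjc (row k V) *m Ac = (lam k)^* *: map_mx conjc (row k V).
  by rewrite -{1}conj_Ac -map_mxM V_eigen map_mxZ.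
by apply: contraNeq => /(eigen_coord_eq V_unit V_eigen conj_row) ->; rewrite normcJ.
Qed.

Lemma conj_usubmx : (map_mx conjc (usubmx V) <= usubmx V)%MS.
Proof.
apply/row_subP => k; rewrite -map_row row_usubmx; set w := map_mx conjc _.
have w_e : rsubmx (w *m invmx V) = 0.
  apply/rowP => j; rewrite [LHS]mxE [RHS]mxE conj_eigen_coord_eq0 //.
  by rewrite gt_eqF // (lt_trans (lam_contr k) (lam_exp j)).
by rewrite {1}(mul_invmx_hsub w V_unit) w_e mul0mx addr0 submxMl.
Qed.

Lemma conj_dsubmx : (map_mx conjc (dsubmx V) <= dsubmx V)%MS.
Proof.
apply/row_subP => k; rewrite -map_row row_dsubmx; set w := map_mx conjc _.
have w_c : lsubmx (w *m invmx V) = 0.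
  apply/rowP => j; rewrite [LHS]mxE [RHS]mxE conj_eigen_coord_eq0 //.
  by rewrite lt_eqF // (lt_trans (lam_contr j) (lam_exp k)).
by rewrite {1}(mul_invmx_hsub w V_unit) w_c mul0mx add0r submxMl.
Qed.

Definition coord_p := mxZC Lp *m invmx V.
Definition coord_m := mxZC Lm *m invmx V.

Lemma coord_p_exp_unit : rsubmx coord_p \in unitmx.
Proof.
rewrite -row_free_unit; apply/inj_row_free => v v_ker.
have Lp_free : row_free (mxZR R Lp) by rewrite /row_free Lp_rank.
apply: (real_kernel_trivial Lp_free conj_usubmx).
  by move=> x /submxP[c xc]; apply: Lp_tr; exists c.
have -> : mxZC Lp = coord_p *m V by rewrite mulmxKV.
rewrite (mul_invmx_hsub (coord_p *m V) V_unit) mulmxK // mulmxDr !mulmxA.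
by rewrite v_ker mul0mx addr0 submxMl.
Qed.

Lemma coord_m_contr_unit : lsubmx coord_m \in unitmx.
Proof.
rewrite -row_free_unit; apply/inj_row_free => v v_ker.
have Lm_free : row_free (mxZR R Lm) by rewrite /row_free Lm_rank.
apply: (real_kernel_trivial Lm_free conj_dsubmx).
  by move=> x /submxP[c xc]; apply: Lm_tr; exists c.
have -> : mxZC Lm = coord_m *m V by rewrite mulmxKV.
rewrite (mul_invmx_hsub (coord_m *m V) V_unit) mulmxK // mulmxDr !mulmxA.
by rewrite v_ker mul0mx add0r submxMl.
Qed.

Lemma lam_exp_neq0 i : lam (rshift g i) != 0.
Proof. by apply: contraTneq (lam_exp i) => ->; rewrite normr0 ltr10. Qed.

Definition shifted_basis K : 'M[int]_(g + g) := col_mx (Lp *m A^T ^+ K) Lm.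

Definition rescaled K : 'M[R[i]]_(g + g) :=
  block_mx (lsubmx coord_p *m diag_mx (\row_i lam (lshift g i) ^+ K)) (rsubmx coord_p)
    (lsubmx coord_m) (rsubmx coord_m *m diag_mx (\row_i (lam (rshift g i))^-1 ^+ K)).

Definition rescaled_lim : 'M[R[i]]_(g + g) :=
  block_mx 0 (rsubmx coord_p) (lsubmx coord_m) 0.

Lemma mxZC_shifted_basis K :
  mxZC (shifted_basis K) = col_mx (coord_p *m diag_mx (\row_k lam k ^+ K)) coord_m *m V.
Proof.
rewrite mul_col_mx -!mulmxA -(eigenbasis_exp V_eigen) !mulmxA !mulmxKV //.
by rewrite !mxRC_mxZR map_col_mx map_mxM map_mxX map_trmx.
Qed.

Lemma det_shifted_basis K : (\det (shifted_basis K))%:~R =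
  \det (rescaled K) * (\prod_i lam (rshift g i)) ^+ K * \det V.
Proof.
pose De := diag_mx (\row_i lam (rshift g i) ^+ K).
rewrite -det_map_mx -mxRC_mxZR mxZC_shifted_basis.
have -> : col_mx (coord_p *m diag_mx (\row_k lam k ^+ K)) coord_m =
    rescaled K *m block_mx 1%:M 0 0 De.
  have inv_pow : diag_mx (\row_i (lam (rshift g i))^-1 ^+ K) *m De = 1%:M.
    rewrite mulmx_diag -diag_const_mx; congr diag_mx; apply/rowP => i.
    by rewrite !mxE exprVn mulVf // expf_neq0 // lam_exp_neq0.
  rewrite row_mx_lrshift diag_mx_row.
  rewrite -[X in col_mx (X *m _)]hsubmxK -[X in col_mx _ X]hsubmxK.
  rewrite mul_row_block mulmx_block -(mulmxA (rsubmx coord_m) _ De) inv_pow.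
  by rewrite block_mxEv !mulmx0 !mulmx1 !addr0 !add0r.
rewrite !det_mulmx det_ublock det1 mul1r det_diag -prodrXl.
by congr (_ * _ * _); apply: eq_bigr => i _; rewrite mxE.
Qed.

Lemma near_det_rescaled :
  \forall K \near \oo, `|\det rescaled_lim| / 2 <= `|\det (rescaled K)|.
Proof.
apply: near_norm_det_ge_half; apply: cvg_block_mx => i j; try exact: cvg_cst.
  apply: cvg0_mul_diag_mx => {}j; under eq_cvg do rewrite mxE.
  exact/cvgc_expr/lam_contr.
apply: cvg0_mul_diag_mx => {}j; under eq_cvg do rewrite mxE.
apply: cvgc_expr; rewrite normfV invf_lt1 ?(lt_trans ltr01) //; exact: lam_exp.
Qed.

Lemma det_shifted_basis_growth : exists c r : R, [/\ 0 < c, 1 < r &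
  \forall K \near \oo, c * r ^+ K <= (`|\det (shifted_basis K)|%N)%:R].
Proof.
pose c := Normc.normc (\det rescaled_lim) / 2 * Normc.normc (\det V).
pose r := Normc.normc (\prod_i lam (rshift g i)).
have lim_unit : rescaled_lim \in unitmx.
  exact: unitmx_antidiag_block coord_p_exp_unit coord_m_contr_unit.
exists c, r; split.
- by rewrite !mulr_gt0 ?invr_gt0 ?ltr0n ?normc_gt0 -?unitfE -?unitmxE.
- rewrite -ltcR -normr_normc normr_prod.
  have : \prod_(i < g) (1 : R[i]) < \prod_i `|lam (rshift g i)|.
    apply: ltr_prod => [|i _]; last by rewrite ler01 lam_exp.
    by apply/hasP; exists (Ordinal g_gt0); rewrite ?mem_index_enum.
  by rewrite big1.
apply: filterS near_det_rescaled => K det_ge.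
rewrite -lecR; have -> : (c * r ^+ K)%:C =
    `|\det rescaled_lim| / 2 * `|\det V| * `|\prod_i lam (rshift g i)| ^+ K.
  by rewrite !normr_normc !rmorphM rmorphXn fmorphV rmorph_nat.
rewrite rmorph_nat natr_absz intr_norm det_shifted_basis !normrM normrX mulrAC.
by rewrite ler_wpM2r // ler_wpM2r // exprn_ge0.
Qed.

End HyperbolicLattices.

Lemma geometric_bound_cases (R : realType) (c r : R) K0 : 0 < c -> 1 < r ->
  exists2 C : R, 0 < C & forall N m, m%:R <= C * r ^+ N ->
    m = 0%N \/ (K0 <= N + N)%N /\ m%:R <= c * r ^+ (N + N).
Proof.
move=> c_gt0 r_gt1; have r_gt0 : 0 < r by apply: lt_trans r_gt1.
pose C := Num.min c (r ^- K0).
exists C => [|N m m_le]; first by rewrite lt_min c_gt0 invr_gt0 exprn_gt0.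
have [N_small | N_large] := ltnP N K0; [left | right; split].
- have C_small : C * r ^+ N < 1.
    apply: (@le_lt_trans _ _ (r ^- K0 * r ^+ N)).
      by rewrite ler_wpM2r ?exprn_ge0 ?(ltW r_gt0) // /C ge_min lexx orbT.
    by rewrite mulrC ltr_pdivrMr ?exprn_gt0 // mul1r ltr_eXn2l.
  by have := le_lt_trans m_le C_small; rewrite ltrn1 ltnS leqn0 => /eqP.
- exact: leq_trans N_large (leq_addr _ _).
apply: (le_trans m_le); apply: (@le_trans _ _ (c * r ^+ N)).
  by rewrite ler_wpM2r ?exprn_ge0 ?(ltW r_gt0) // /C ge_min lexx.
rewrite exprD mulrA ler_peMr ?exprn_ege1 ?(ltW r_gt1) //.
by rewrite mulr_ge0 ?exprn_ge0 ?(ltW c_gt0) ?(ltW r_gt0).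
Qed.

Theorem lemma2p1 (R : realType) (g : nat) (g_gt0 : (0 < g)%N)
  (A : 'M[int]_(g + g)) (A_GL : A \in unitmx)
  (V : 'M[R[i]]_(g + g)) (lam : 'I_(g + g) -> R[i])
  (hyp : hyperbolic_basis A V lam)
  (Lp Lm : 'M[int]_(g, g + g))
  (Lp_rank : \rank (@mxZR R _ _ Lp) = g) (Lm_rank : \rank (@mxZR R _ _ Lm) = g)
  (Lp_tr : meets_trivially Lp (in_Ec V))
  (Lm_tr : meets_trivially Lm (in_Ee V)) :
  exists C : R, 0 < C /\ exists r : R, 1 < r /\
    forall N : nat, (1 <= N)%N ->
      forall m : nat, m%:R <= C * r ^+ N ->
        quot_card_ge (Lp *m (A^T) ^+ N) (Lm *m (invmx A^T) ^+ N) m.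
Proof.
case: hyp => V_unit V_eigen lam_contr lam_exp.
have [c [r [c_gt0 r_gt1 [K0 _ growth]]]] := det_shifted_basis_growth
  g_gt0 V_unit V_eigen lam_contr lam_exp Lp_rank Lm_rank Lp_tr Lm_tr.
have [C C_gt0 C_cases] := geometric_bound_cases K0 c_gt0 r_gt1.
exists C; split => //; exists r; split => // N _ m /C_cases[-> | [N_large m_le]].
  by exists (fun _ => 0) => -[].
apply: quot_card_ge_col_det; rewrite absz_det_col_exp ?unitmx_tr //.
by rewrite -(ler_nat R) (le_trans m_le (growth _ N_large)).
Qed.
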